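(* Let $a>0$ and let $f:(a,\infty)\to\mathbb{R}$ be real analytic and not identically zero. Let $\mathcal I=\{x\in(a,\infty):f(x)=0\}$. Assume that: (1) as $x\to a$ we have $\kappa(f,x)\to\infty$, and for every sequence $x_j\in(a,\infty)$ with $x_j\to\infty$ and $\mathrm{dist}(x_j,\mathcal I)\to0$ we have $\kappa(f,x_j)\to\infty$; (2) both as $x\to a$ and as $x\to\infty$ we have $\limsup|H(f,x)|\leq C$ for some constant $C>0$, where $H(f,x)=\frac{x^2f(x)f''(x)}{f(x)^2+x^2f'(x)^2}$. The part of this hypothesis concerning $x\to a$ is automatically satisfied if $f$ admits an analytic extension to $(a-\epsilon,\infty)$ for some $\epsilon>0$. Then $f$ is amenable.
   Context: Relative distance on $\mathbb{R}$: $\mathrm{dist}(x,y)=0$ if $x=y=0$, $\mathrm{dist}(x,y)=|\log(y/x)|$ if $xy>0$, and $\mathrm{dist}(x,y)=\infty$ otherwise; for a set $S$, $\mathrm{dist}(x,S)=\inf_{s\in S}\mathrm{dist}(x,s)$. For a real analytic function $f$ on an open set $\Omega\subseteq\mathbb{R}$, not identically zero, the condition number is $\kappa(f,x)=0$ if $x=0$, $\kappa(f,x)=\infty$ if $x\neq0$ and $f(x)=0$, and $\kappa(f,x)=|x|\,|f'(x)|/|f(x)|$ otherwise; set $\mu(f,x)=1+\kappa(f,x)$. The function $f:\Omega\to\mathbb{R}$ is called amenable if there is a constant $C>0$ such that for every $x\in\Omega$ with $\kappa(f,x)<\infty$, the set $B_x=\{y\in\mathbb{R}:\mathrm{dist}(y,x)<1/(C\mu(f,x))\}$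 is contained in $\Omega$, and $\mu(f,y)\leq C\mu(f,x)$ for all $y\in B_x$. *)

From Stdlib Require Import Reals.
From Coquelicot Require Import Coquelicot.
Open Scope R_scope.

Definition rdist (x y : R) : Rbar :=
  if Req_EM_T x 0 then (if Req_EM_T y 0 then Finite 0 else p_infty)
  else if Rlt_dec 0 (x * y) then Finite (Rabs (ln (y / x))) else p_infty.

(* "dist(x, S) < e" unfolded: inf_{s in S} dist(x,s) < e  <->  some s in S has dist(x,s) < e. *)
Definition rdist_set_lt (x : R) (S : R -> Prop) (e : R) : Prop :=
  exists s, S s /\ Rbar_lt (rdist x s) (Finite e).

Definition real_analytic_on (Om : R -> Prop) (f : R -> R) : Prop :=
  forall x0, Om x0 -> exists r, 0 < r /\ exists c : nat -> R,
    forall x, Om x -> Rabs (x - x0) < r -> is_pseries c (x - x0) (f x).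

Definition kappa (f : R -> R) (x : R) : Rbar :=
  if Req_EM_T x 0 then Finite 0
  else if Req_EM_T (f x) 0 then p_infty
  else Finite (Rabs x * Rabs (Derive f x) / Rabs (f x)).

Definition mu (f : R -> R) (x : R) : Rbar := Rbar_plus (Finite 1) (kappa f x).

Definition amenable (Om : R -> Prop) (f : R -> R) : Prop :=
  exists C, 0 < C /\
    forall x k, Om x -> kappa f x = Finite k ->
      (forall y, Rbar_lt (rdist y x) (Finite (1 / (C * (1 + k)))) -> Om y) /\
      (forall y, Rbar_lt (rdist y x) (Finite (1 / (C * (1 + k)))) ->
                 Rbar_le (mu f y) (Finite (C * (1 + k)))).

Definition Hden (f : R -> R) (x : R) : R := (f x)^2 + x^2 * (Derive f x)^2.
Definition Hf (f : R -> R) (x : R) : R := x^2 * f x * Derive_n f 2 x / Hden f x.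

From Stdlib Require Import Reals Lra Lia Classical.
From Coquelicot Require Import Coquelicot.
Open Scope R_scope.

(* Let wf f t = f t / sqrt (f t ^ 2 + t ^ 2 * f'(t) ^ 2).  Where f t <> 0 we have
   kappa <= 1 / |wf| <= 1 + kappa, so |wf| plays the role of 1 / mu, and a direct computation
   gives |t * wf'(t)| <= 2 + |H(f, t)|.  H is bounded on (a, oo): near a and near oo by (2), and
   on compact subintervals by analyticity (at a zero of order m >= 1, H(f, x) -> (m - 1) / m);
   let B bound |H|.  So in the variable ln t, |wf| is Lipschitz as long as f does not vanish;
   on the ln-ball of radius |wf f x| / (2 (2 + B)) around x it therefore stays above
   |wf f x| / 2, and f cannot vanish there because |(ln f ^ 2)'| <= 4 / |wf f x| keeps f ^ 2
   away from 0.  This is the amenability estimate, and (1a) keeps the ball inside (a, oo). *)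

(** * Real analysis on intervals *)

Lemma continuity_pt_near (g : R -> R) (z eps : R) : continuity_pt g z -> 0 < eps ->
  exists d, 0 < d /\ forall x, Rabs (x - z) < d -> Rabs (g x - g z) < eps.
Proof.
  intros Hc He. destruct (Hc eps He) as [d [Hd H]].
  exists d. split; [exact Hd|]. intros x Hx.
  destruct (Req_dec x z) as [->|Hne].
  - rewrite Rminus_diag, Rabs_R0. exact He.
  - apply H. split; [split; [exact I | auto] | exact Hx].
Qed.

Lemma continuity_pt_of_ex_derive (g : R -> R) (x : R) : ex_derive g x -> continuity_pt g x.
Proof. intros H. apply continuity_pt_filterlim. apply (ex_derive_continuous g x H). Qed.

Definition bounded_near (g : R -> R) (z : R) : Prop :=
  exists d B, 0 < d /\ forall x, Rabs (x - z) < d -> Rabs (g x) <= B.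

Lemma bounded_near_of_continuity (g : R -> R) (z : R) : continuity_pt g z -> bounded_near g z.
Proof.
  intros Hc. destruct (continuity_pt_near g z 1 Hc Rlt_0_1) as [d [Hd H]].
  exists d, (Rabs (g z) + 1). split; [exact Hd|].
  intros x Hx. specialize (H x Hx). pose proof (Rabs_triang_inv (g x) (g z)). lra.
Qed.

Lemma real_induction (P : R -> Prop) (T : R) : 0 <= T -> P 0 ->
  (forall t, 0 <= t < T -> (forall s, 0 <= s <= t -> P s) ->
     exists e, 0 < e /\ forall s, t < s <= t + e -> P s) ->
  (forall t, 0 < t <= T -> (forall s, 0 <= s < t -> P s) -> P t) ->
  forall t, 0 <= t <= T -> P t.
Proof.
  intros HT H0 Hopen Hclosed.
  set (E := fun t => 0 <= t <= T /\ forall s, 0 <= s <= t -> P s).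
  assert (HE0 : E 0).
  { split; [lra|]. intros s Hs. now replace s with 0 by lra. }
  destruct (completeness E) as [m [Hub Hlub]].
  { exists T. intros t [Ht _]. lra. }
  { now exists 0. }
  assert (Hm0 : 0 <= m) by now apply Hub.
  assert (HmT : m <= T) by (apply Hlub; intros t [Ht _]; lra).
  assert (Hbelow : forall s, 0 <= s < m -> P s).
  { intros s Hs. apply NNPP. intros Hn.
    assert (m <= s); [|lra].
    apply Hlub. intros t [Ht Hts]. apply Rnot_lt_le. intros Hst. apply Hn, Hts. lra. }
  assert (HEm : E m).
  { split; [lra|]. intros s Hs.
    destruct (Req_dec s m) as [->|Hne]; [|apply Hbelow; lra].
    destruct (Req_dec m 0) as [->|Hm]; [exact H0|]. apply Hclosed; [lra | exact Hbelow]. }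
  assert (m = T) as <-.
  { apply Rle_antisym; [exact HmT|]. apply Rnot_lt_le. intros HmT'.
    destruct (Hopen m) as [e [He Hp]]; [lra | apply HEm |].
    assert (E (Rmin (m + e) T)).
    { split; [split; [apply Rmin_glb; lra | apply Rmin_r]|].
      intros s Hs. destruct (Rle_dec s m); [apply HEm; lra|].
      apply Hp. split; [lra|]. eapply Rle_trans; [apply Hs | apply Rmin_l]. }
    assert (Rmin (m + e) T <= m) by now apply Hub.
    assert (m < Rmin (m + e) T) by (apply Rmin_glb_lt; lra). lra. }
  intros t Ht. apply HEm, Ht.
Qed.

Lemma bounded_on_segment (g : R -> R) (lo hi : R) : lo <= hi ->
  (forall z, lo <= z <= hi -> bounded_near g z) ->
  exists B, forall x, lo <= x <= hi -> Rabs (g x) <= B.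
Proof.
  intros Hle Hnear.
  set (P := fun t => exists B, forall x, lo <= x <= lo + t -> Rabs (g x) <= B).
  assert (Hglue : forall t, 0 <= t <= hi - lo -> exists d, 0 < d /\
            forall u w, t - d < u -> P u -> w < t + d -> P w).
  { intros t Ht. destruct (Hnear (lo + t)) as [d [B1 [Hd HB1]]]; [lra|].
    exists d. split; [exact Hd|]. intros u w Hu [B0 HB0] Hw.
    exists (Rmax B0 B1). intros x Hx. destruct (Rle_dec x (lo + u)).
    - eapply Rle_trans; [apply HB0; lra | apply Rmax_l].
    - eapply Rle_trans; [apply HB1, Rabs_def1; lra | apply Rmax_r]. }
  assert (HP : forall t, 0 <= t <= hi - lo -> P t).
  { apply real_induction; [lra | | |].
    - exists (Rabs (g lo)). intros x Hx. now replace x with lo by lra.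
    - intros t Ht Hall. destruct (Hglue t) as [d [Hd Hd']]; [lra|].
      exists (d / 2). split; [lra|]. intros s Hs.
      apply (Hd' t); [lra | apply Hall; lra | lra].
    - intros t Ht Hall. destruct (Hglue t) as [d [Hd Hd']]; [lra|].
      assert (Hu : t - d / 2 <= Rmax 0 (t - d / 2)) by apply Rmax_r.
      apply (Hd' (Rmax 0 (t - d / 2))); [lra | | lra].
      apply Hall. split; [apply Rmax_l | apply Rmax_lub_lt; lra]. }
  destruct (HP (hi - lo)) as [B HB]; [lra|].
  exists B. intros x Hx. apply HB. lra.
Qed.

Lemma mvt_abs_le (g dg : R -> R) (lo hi L : R) : lo <= hi ->
  (forall t, lo <= t <= hi -> is_derive g t (dg t) /\ Rabs (dg t) <= L) ->
  Rabs (g hi - g lo) <= L * (hi - lo).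
Proof.
  intros Hle H.
  destruct (MVT_gen g lo hi dg) as [c [Hc E]];
    rewrite ?Rmin_left, ?Rmax_right in * by exact Hle.
  - intros x Hx. apply H. lra.
  - intros x Hx. apply continuity_pt_of_ex_derive. exists (dg x). apply H, Hx.
  - rewrite E, Rabs_mult, (Rabs_pos_eq (hi - lo)) by lra.
    apply Rmult_le_compat_r; [lra|]. apply H, Hc.
Qed.

Lemma continuity_pt_ge_left (g : R -> R) (lo t eps : R) : lo < t -> continuity_pt g t ->
  (forall s, lo <= s < t -> eps <= g s) -> eps <= g t.
Proof.
  intros Hlt Hc H. apply Rnot_lt_le. intros Hgt.
  destruct (continuity_pt_near g t (eps - g t) Hc) as [d [Hd Hd']]; [lra|].
  set (s := Rmax lo (t - d / 2)).
  assert (Hs : lo <= s < t) by (split; [apply Rmax_l | apply Rmax_lub_lt; lra]).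
  assert (t - d / 2 <= s) by apply Rmax_r.
  specialize (Hd' s ltac:(apply Rabs_def1; lra)). specialize (H s Hs).
  apply Rabs_def2 in Hd'. lra.
Qed.

Lemma is_derive_ln_sqr (F : R -> R) (t d : R) : is_derive F t d -> F t <> 0 ->
  is_derive (fun u => ln (F u ^ 2)) t (2 * d / F t).
Proof.
  intros H HF.
  assert (HF2 : 0 < F t * (F t * 1)) by (rewrite Rmult_1_r; apply Rsqr_pos_lt, HF).
  auto_derive.
  - repeat split; [now exists d | exact HF2].
  - change (Derive (fun x => F x) t) with (Derive F t).
    rewrite (is_derive_unique _ _ _ H). field. exact HF.
Qed.

Lemma exp_le_sqr_of_log_derivative_le (F : R -> R) (s T L : R) : 0 <= s <= T -> 0 <= L ->
  (forall u, 0 <= u <= s ->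
     F u <> 0 /\ is_derive F u (Derive F u) /\ Rabs (Derive F u) <= L * Rabs (F u)) ->
  exp (ln (F 0 ^ 2) - 2 * L * T) <= F s ^ 2.
Proof.
  intros Hs HL HF.
  assert (Hmvt : Rabs (ln (F s ^ 2) - ln (F 0 ^ 2)) <= 2 * L * (s - 0)).
  { apply (mvt_abs_le (fun u => ln (F u ^ 2)) (fun u => 2 * Derive F u / F u)); [lra|].
    intros u Hu. destruct (HF u Hu) as [Hnz [Hd Hb]].
    split; [apply is_derive_ln_sqr; assumption|].
    pose proof (Rabs_pos_lt _ Hnz).
    unfold Rdiv. rewrite !Rabs_mult, Rabs_inv, (Rabs_pos_eq 2) by lra.
    apply (Rmult_le_reg_r (Rabs (F u))); [assumption|].
    rewrite Rmult_assoc, Rinv_l by lra. lra. }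
  assert (2 * L * (s - 0) <= 2 * L * T) by (apply Rmult_le_compat_l; lra).
  apply Rnot_lt_le. intros Hlt.
  apply ln_increasing in Hlt; [|apply pow2_gt_0, (HF s); lra].
  rewrite ln_exp in Hlt. apply Rabs_le_between in Hmvt. lra.
Qed.

Lemma nonvanishing_continuation (F W : R -> R) (T K L v : R) :
  0 <= T -> 0 <= K -> 0 <= L -> K * T <= v / 2 -> F 0 <> 0 -> v <= Rabs (W 0) ->
  (forall t, 0 <= t <= T -> is_derive F t (Derive F t)) ->
  (forall t, 0 <= t <= T -> F t <> 0 ->
     is_derive W t (Derive W t) /\ Rabs (Derive W t) <= K) ->
  (forall t, 0 <= t <= T -> F t <> 0 -> v / 2 <= Rabs (W t) ->
     Rabs (Derive F t) <= L * Rabs (F t)) ->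
  F T <> 0 /\ v / 2 <= Rabs (W T).
Proof.
  intros HT HK HL HKT HF0 HW0 HF HW HFW.
  assert (HFc : forall t, 0 <= t <= T -> continuity_pt F t)
    by (intros t Ht; apply continuity_pt_of_ex_derive; eexists; apply HF, Ht).
  assert (HWs : forall s, 0 <= s <= T -> (forall t, 0 <= t <= s -> F t <> 0) ->
            v / 2 <= Rabs (W s)).
  { intros s Hs Hnz.
    assert (Hmvt : Rabs (W s - W 0) <= K * (s - 0))
      by (apply (mvt_abs_le W (Derive W)); [lra|]; intros t Ht; apply HW, Hnz; lra).
    assert (K * (s - 0) <= K * T) by (apply Rmult_le_compat_l; lra).
    pose proof (Rabs_triang_inv (W 0) (W s)). rewrite Rabs_minus_sym in Hmvt. lra. }
  assert (Hnz : forall t, 0 <= t <= T -> F t <> 0).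
  { apply real_induction; [exact HT | exact HF0 | |].
    - intros t Ht Hall.
      destruct (continuity_pt_near F t (Rabs (F t))) as [e [He He']];
        [apply HFc; lra | apply Rabs_pos_lt, Hall; lra |].
      exists (e / 2). split; [lra|]. intros s Hs HFs.
      specialize (He' s ltac:(apply Rabs_def1; lra)).
      rewrite HFs, Rminus_0_l, Rabs_Ropp in He'. lra.
    - intros t Ht Hall.
      (* On [0, t), |W| >= v / 2, hence |(ln F ^ 2)'| <= 2 L and F ^ 2 stays above eps. *)
      set (eps := exp (ln (F 0 ^ 2) - 2 * L * T)).
      assert (Hlow : forall s, 0 <= s < t -> eps <= F s ^ 2).
      { intros s Hs. apply exp_le_sqr_of_log_derivative_le; [lra | exact HL|].
        intros u Hu. assert (Hnz' : forall r, 0 <= r <= u -> F r <> 0) by (intros; apply Hall; lra).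
        split; [apply Hnz'; lra|]. split; [apply HF; lra|].
        apply HFW; [lra | apply Hnz'; lra | apply HWs; [lra | exact Hnz']]. }
      intros HFt.
      assert (Heps : eps <= F t ^ 2).
      { apply (continuity_pt_ge_left (fun u => F u ^ 2) 0); [lra | | exact Hlow].
        apply continuity_pt_of_ex_derive. auto_derive. eexists; apply HF; lra. }
      assert (0 < eps) by apply exp_pos.
      rewrite HFt in Heps. lra. }
  split; [apply Hnz; lra|]. apply HWs; [lra|]. intros t Ht. apply Hnz. lra.
Qed.

(** * Power series and real analytic functions *)

Lemma CV_radius_ge_of_ex_pseries (c : nat -> R) (rho : R) : 0 < rho ->
  (forall y, Rabs y < rho -> ex_pseries c y) -> Rbar_le rho (CV_radius c).
Proof.
  intros Hrho Hc.
  assert (Hy : forall y, 0 <= y < rho -> Rbar_le y (CV_radius c)).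
  { intros y Hy. apply CV_radius_bounded.
    assert (Hlim : is_lim_seq (fun n => c n * y ^ n) 0).
    { apply ex_series_lim_0, ex_pseries_R, Hc. rewrite Rabs_pos_eq; lra. }
    destruct (filterlim_bounded (fun n => c n * y ^ n)) as [M HM].
    { exists 0. exact Hlim. }
    exists M. exact HM. }
  destruct (CV_radius c) as [r| |] eqn:E; simpl; auto.
  - apply Rnot_lt_le. intros Hr.
    pose proof (CV_radius_ge_0 c) as H0. rewrite E in H0. simpl in H0.
    specialize (Hy ((r + rho) / 2)). simpl in Hy. lra.
  - apply (Hy 0). lra.
Qed.

Lemma CV_radius_incr_n (c : nat -> R) (n : nat) : CV_radius (PS_incr_n c n) = CV_radius c.
Proof. induction n as [|n IH]; simpl; [reflexivity|]. now rewrite CV_radius_incr_1. Qed.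

Lemma CV_radius_decr_n (c : nat -> R) (n : nat) : CV_radius (PS_decr_n c n) = CV_radius c.
Proof.
  induction n as [|n IH]; [reflexivity|].
  rewrite <- IH, <- (CV_radius_decr_1 (PS_decr_n c n)).
  apply CV_radius_ext. intros k. unfold PS_decr_n, PS_decr_1. f_equal. lia.
Qed.

Lemma least_nonzero (c : nat -> R) : (exists n, c n <> 0) ->
  exists m, c m <> 0 /\ forall k, (k < m)%nat -> c k = 0.
Proof.
  intros Hex.
  destruct (Wf_nat.dec_inh_nat_subset_has_unique_least_element (fun n => c n <> 0)
              (fun n => classic _) Hex) as [m [[Hm Hleast] _]].
  exists m. split; [exact Hm|]. intros k Hk. apply NNPP. intros Hck.
  specialize (Hleast k Hck). lia.
Qed.

Lemma PSeries_pow_mul_factor (c : nat -> R) (m j : nat) (s : R) :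
  (forall k, (k < m)%nat -> c k = 0) ->
  s ^ j * PSeries (PS_derive_n j c) s
  = s ^ m * PSeries (PS_decr_n (PS_incr_n (PS_derive_n j c) j) m) s.
Proof.
  intros Hc. rewrite <- PSeries_incr_n. apply PSeries_decr_n_aux.
  intros k Hk. rewrite PS_incr_n_simplify.
  destruct (Compare_dec.le_lt_dec j k) as [Hjk|]; [|reflexivity].
  unfold PS_derive_n. replace (k - j + j)%nat with k by lia.
  rewrite Hc by exact Hk. apply Rmult_0_r.
Qed.

Lemma ball_locally (P : R -> Prop) (z rho x : R) : Rabs (x - z) < rho ->
  (forall t, Rabs (t - z) < rho -> P t) -> locally x P.
Proof.
  intros Hx HP. assert (He : 0 < rho - Rabs (x - z)) by lra.
  exists (mkposreal _ He). intros t Ht. apply HP.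
  change (Rabs (t - x) < rho - Rabs (x - z)) in Ht.
  replace (t - z) with ((t - x) + (x - z)) by ring.
  eapply Rle_lt_trans; [apply Rabs_triang | lra].
Qed.

Lemma analytic_local_pseries (a : R) (f : R -> R) (z : R) :
  real_analytic_on (fun x => a < x) f -> a < z ->
  exists rho c, 0 < rho /\ Rbar_le rho (CV_radius c) /\
    forall n x, Rabs (x - z) < rho -> Derive_n f n x = PSeries (PS_derive_n n c) (x - z).
Proof.
  intros Han Hz.
  destruct (Han z Hz) as [r [Hr [c Hc]]].
  set (rho := Rmin r (z - a)).
  assert (Hrho : 0 < rho) by (apply Rmin_pos; lra).
  assert (Hball : forall x, Rabs (x - z) < rho -> a < x /\ Rabs (x - z) < r).
  { intros x Hx. assert (rho <= r) by apply Rmin_l. assert (rho <= z - a) by apply Rmin_r.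
    apply Rabs_def2 in Hx. split; [lra|]. apply Rabs_def1; lra. }
  assert (Hf : forall x, Rabs (x - z) < rho -> f x = PSeries c (x - z)).
  { intros x Hx. destruct (Hball x Hx).
    symmetry. apply is_pseries_unique. now apply Hc. }
  assert (Hrad : Rbar_le rho (CV_radius c)).
  { apply CV_radius_ge_of_ex_pseries; [exact Hrho|]. intros y Hy.
    replace y with ((z + y) - z) by ring. exists (f (z + y)).
    apply Hc; apply Hball; now replace (z + y - z) with y by ring. }
  exists rho, c. split; [exact Hrho|]. split; [exact Hrad|].
  intros n x Hx.
  rewrite (Derive_n_ext_loc f (fun t => PSeries c (t + - z))).
  - rewrite Derive_n_comp_trans. apply Derive_n_PSeries.
    eapply Rbar_lt_le_trans; [|exact Hrad]. exact Hx.
  - apply (ball_locally _ z rho x Hx). exact Hf.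
Qed.

Lemma analytic_is_derive_n (a : R) (f : R -> R) (x : R) (n : nat) :
  real_analytic_on (fun x => a < x) f -> a < x ->
  is_derive (Derive_n f n) x (Derive_n f (S n) x).
Proof.
  intros Han Hx. apply Derive_correct.
  destruct (analytic_local_pseries a f x Han Hx) as [rho [c [Hrho [Hrad Hloc]]]].
  apply (ex_derive_ext_loc (fun t => PSeries (PS_derive_n n c) (t - x))).
  - apply (ball_locally _ x rho x); [rewrite Rminus_diag, Rabs_R0; exact Hrho|].
    intros t Ht. symmetry. apply Hloc, Ht.
  - apply (ex_derive_comp (PSeries (PS_derive_n n c)) (fun t => t - x)).
    + apply ex_derive_PSeries. rewrite Rminus_diag, Rabs_R0, CV_radius_derive_n.
      eapply Rbar_lt_le_trans; [|exact Hrad]. exact Hrho.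
    + auto_derive. exact I.
Qed.

(** * Boundedness of H *)

Lemma Hf_eq_0 (f : R -> R) (x : R) : f x = 0 -> Hf f x = 0.
Proof. intros H. unfold Hf. rewrite H. unfold Rdiv. ring. Qed.

Lemma Hf_eq_0_of_Hden (f : R -> R) (x : R) : Hden f x = 0 -> Hf f x = 0.
Proof. intros H. unfold Hf. rewrite H. unfold Rdiv. rewrite Rinv_0. ring. Qed.

Lemma Hden_pos (f : R -> R) (x : R) : f x <> 0 -> 0 < Hden f x.
Proof.
  intros H. unfold Hden. pose proof (pow2_gt_0 _ H).
  assert (0 <= x ^ 2 * Derive f x ^ 2) by (apply Rmult_le_pos; apply pow2_ge_0). lra.
Qed.

Lemma Hf_rescale (x s P F0 F1 F2 A0 A1 A2 : R) : s <> 0 -> P <> 0 ->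
  F0 = P * A0 -> s * F1 = P * A1 -> s ^ 2 * F2 = P * A2 ->
  x ^ 2 * F0 * F2 / (F0 ^ 2 + x ^ 2 * F1 ^ 2)
  = x ^ 2 * A0 * A2 / (s ^ 2 * A0 ^ 2 + x ^ 2 * A1 ^ 2).
Proof.
  intros Hs HP E0 E1 E2.
  replace F1 with (P * A1 / s) by (rewrite <- E1; field; exact Hs).
  replace F2 with (P * A2 / s ^ 2) by (rewrite <- E2; field; exact Hs).
  rewrite E0.
  replace (x ^ 2 * (P * A0) * (P * A2 / s ^ 2)) with (P ^ 2 / s ^ 2 * (x ^ 2 * A0 * A2))
    by (field; exact Hs).
  replace ((P * A0) ^ 2 + x ^ 2 * (P * A1 / s) ^ 2)
    with (P ^ 2 / s ^ 2 * (s ^ 2 * A0 ^ 2 + x ^ 2 * A1 ^ 2)) by (field; exact Hs).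
  apply Rdiv_mult_l_l. unfold Rdiv. apply Rmult_integral_contrapositive_currified.
  - now apply pow_nonzero.
  - now apply Rinv_neq_0_compat, pow_nonzero.
Qed.

Lemma Hf_bounded_near_of_nonzero (a : R) (f : R -> R) (z : R) :
  real_analytic_on (fun x => a < x) f -> a < z -> f z <> 0 ->
  bounded_near (Hf f) z.
Proof.
  intros Han Hz Hfz. apply bounded_near_of_continuity, continuity_pt_of_ex_derive.
  pose proof (Hden_pos f z Hfz) as HD. unfold Hf, Hden in *.
  assert (D : forall n, ex_derive (Derive_n f n) z)
    by (intros n; eexists; apply (analytic_is_derive_n a f z n Han Hz)).
  auto_derive. split; [exact (D 0%nat)|]. split; [exact (D 2%nat)|].
  split; [exact (D 0%nat)|]. split; [exact (D 1%nat)|]. split; [|exact I].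
  apply Rgt_not_eq. replace (f z * (f z * 1) + z * (z * 1) * (Derive f z * (Derive f z * 1)))
    with (f z ^ 2 + z ^ 2 * Derive f z ^ 2) by ring. exact HD.
Qed.

Lemma Hf_bounded_near_of_zero (f : R -> R) (z rho : R) (c : nat -> R) (m : nat) :
  z <> 0 -> 0 < rho -> Rbar_le rho (CV_radius c) ->
  (forall n x, Rabs (x - z) < rho -> Derive_n f n x = PSeries (PS_derive_n n c) (x - z)) ->
  (forall k, (k < S m)%nat -> c k = 0) -> c (S m) <> 0 ->
  bounded_near (Hf f) z.
Proof.
  intros Hz Hrho Hrad Hloc Hlow Hm.
  (* With s = x - z, s ^ j * f^(j) x = s ^ (S m) * A j s, so Hf f x = G s for s <> 0, and G is
     continuous at 0 because A 1 0 = (S m) * c (S m) <> 0. *)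
  set (A := fun j s => PSeries (PS_decr_n (PS_incr_n (PS_derive_n j c) j) (S m)) s).
  assert (HA : forall j, ex_derive (A j) 0).
  { intros j. apply ex_derive_PSeries.
    rewrite CV_radius_decr_n, CV_radius_incr_n, CV_radius_derive_n, Rabs_R0.
    eapply Rbar_lt_le_trans; [|exact Hrad]. exact Hrho. }
  assert (HA1 : A 1%nat 0 <> 0).
  { unfold A. rewrite PSeries_0. unfold PS_decr_n, PS_derive_n. simpl.
    replace (m + 0 + 1)%nat with (S m) by lia.
    apply Rmult_integral_contrapositive_currified; [|exact Hm].
    unfold Rdiv. apply Rmult_integral_contrapositive_currified;
      [|apply Rinv_neq_0_compat]; apply INR_fact_neq_0. }
  set (G := fun s => (z + s) ^ 2 * A 0%nat s * A 2%nat s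
                     / (s ^ 2 * A 0%nat s ^ 2 + (z + s) ^ 2 * A 1%nat s ^ 2)).
  destruct (bounded_near_of_continuity G 0) as [d [B [Hd HG]]].
  { apply continuity_pt_of_ex_derive. unfold G. auto_derive.
    repeat split; try apply HA.
    rewrite Rplus_0_r. replace (0 * (0 * 1) * (A 0%nat 0 * (A 0%nat 0 * 1))
      + z * (z * 1) * (A 1%nat 0 * (A 1%nat 0 * 1))) with ((z * A 1%nat 0) ^ 2) by ring.
    apply pow_nonzero, Rmult_integral_contrapositive_currified; assumption. }
  assert (HB : 0 <= B).
  { eapply Rle_trans; [apply Rabs_pos | apply HG]. rewrite Rminus_0_r, Rabs_R0. exact Hd. }
  exists (Rmin rho d), B. split; [now apply Rmin_pos|].
  intros x Hx.
  assert (Hxr : Rabs (x - z) < rho) by (eapply Rlt_le_trans; [exact Hx | apply Rmin_l]).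
  assert (Hxd : Rabs (x - z) < d) by (eapply Rlt_le_trans; [exact Hx | apply Rmin_r]).
  destruct (Req_dec x z) as [->|Hxz].
  - rewrite Hf_eq_0; [rewrite Rabs_R0; exact HB|].
    change (Derive_n f 0 z = 0).
    rewrite Hloc, Rminus_diag, PSeries_0 by (rewrite Rminus_diag, Rabs_R0; exact Hrho).
    unfold PS_derive_n. rewrite Hlow by lia. ring.
  - specialize (HG (x - z)). rewrite Rminus_0_r in HG.
    replace (Hf f x) with (G (x - z)); [now apply HG|].
    assert (Hfac : forall j, (x - z) ^ j * Derive_n f j x = (x - z) ^ S m * A j (x - z)).
    { intros j. rewrite Hloc by exact Hxr. now apply PSeries_pow_mul_factor. }
    unfold G, Hf, Hden. replace (z + (x - z)) with x by ring. symmetry.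
    apply (Hf_rescale _ _ ((x - z) ^ S m)).
    + lra.
    + apply pow_nonzero. lra.
    + rewrite <- Hfac. simpl. ring.
    + rewrite <- (Hfac 1%nat), pow_1. reflexivity.
    + exact (Hfac 2%nat).
Qed.

Lemma Hf_bounded_near (a : R) (f : R -> R) (z : R) : 0 <= a ->
  real_analytic_on (fun x => a < x) f -> a < z -> bounded_near (Hf f) z.
Proof.
  intros Ha Han Hz.
  destruct (analytic_local_pseries a f z Han Hz) as [rho [c [Hrho [Hrad Hf_ps]]]].
  destruct (classic (exists n, c n <> 0)) as [Hnz|Hzero].
  - destruct (least_nonzero c Hnz) as [[|m] [Hm Hlow]].
    + apply (Hf_bounded_near_of_nonzero a); [exact Han | exact Hz|].
      change (Derive_n f 0 z <> 0).
      rewrite Hf_ps, Rminus_diag, PSeries_0 by (rewrite Rminus_diag, Rabs_R0; exact Hrho).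
      unfold PS_derive_n. simpl. rewrite Rdiv_1_r, Rmult_1_l. exact Hm.
    + apply (Hf_bounded_near_of_zero f z rho c m); auto. lra.
  - exists rho, 0. split; [exact Hrho|]. intros x Hx.
    rewrite Hf_eq_0, Rabs_R0; [lra|].
    change (Derive_n f 0 x = 0). rewrite Hf_ps by exact Hx.
    rewrite <- (PSeries_const_0 (x - z)). apply PSeries_ext. intros n.
    unfold PS_derive_n. replace (c (n + 0)%nat) with 0; [ring|].
    symmetry. apply NNPP. intros Hn. apply Hzero. now exists (n + 0)%nat.
Qed.

Lemma Hf_bounded (a : R) (f : R -> R) : 0 < a -> real_analytic_on (fun x => a < x) f ->
  (exists C, 0 < C /\
     (forall eps, 0 < eps -> exists d, 0 < d /\
        forall x, a < x < a + d -> Hden f x <> 0 -> Rabs (Hf f x) <= C + eps) /\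
     (forall eps, 0 < eps -> exists M, forall x, M < x -> a < x ->
        Hden f x <> 0 -> Rabs (Hf f x) <= C + eps)) ->
  exists B, 0 <= B /\ forall x, a < x -> Rabs (Hf f x) <= B.
Proof.
  intros Ha Han [C [HC [Hnear Hfar]]].
  destruct (Hnear 1 Rlt_0_1) as [d [Hd Hd']].
  destruct (Hfar 1 Rlt_0_1) as [M HM].
  assert (a + d <= Rmax (a + d) M) by apply Rmax_l.
  assert (M <= Rmax (a + d) M) by apply Rmax_r.
  destruct (bounded_on_segment (Hf f) (a + d / 2) (Rmax (a + d) M)) as [B0 HB0]; [lra| |].
  { intros z Hz. apply (Hf_bounded_near a); [lra | exact Han | lra]. }
  exists (Rmax B0 (C + 1)). split; [eapply Rle_trans; [|apply Rmax_r]; lra|].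
  intros x Hx.
  destruct (Req_dec (Hden f x) 0) as [Hz|Hnz].
  { rewrite Hf_eq_0_of_Hden, Rabs_R0 by exact Hz. eapply Rle_trans; [|apply Rmax_r]; lra. }
  destruct (Rlt_dec x (a + d)).
  { eapply Rle_trans; [apply Hd'; [lra | exact Hnz] | apply Rmax_r]. }
  destruct (Rlt_dec M x).
  { eapply Rle_trans; [apply HM; assumption | apply Rmax_r]. }
  eapply Rle_trans; [apply HB0; lra | apply Rmax_l].
Qed.

(** * The normalised value wf *)

Definition wf (f : R -> R) (t : R) : R := f t / sqrt (Hden f t).

Definition kappa_val (f : R -> R) (x : R) : R := Rabs x * Rabs (Derive f x) / Rabs (f x).

Lemma Rabs_wf (f : R -> R) (t : R) : Rabs (wf f t) = Rabs (f t) / sqrt (Hden f t).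
Proof.
  unfold wf, Rdiv. rewrite Rabs_mult, Rabs_inv, (Rabs_pos_eq (sqrt _)) by apply sqrt_pos.
  reflexivity.
Qed.

Lemma Rabs_mul_Derive_le_sqrt_Hden (f : R -> R) (t : R) :
  Rabs (t * Derive f t) <= sqrt (Hden f t).
Proof.
  rewrite <- sqrt_Rsqr_abs. apply sqrt_le_1_alt. unfold Hden, Rsqr.
  pose proof (pow2_ge_0 (f t)). nra.
Qed.

Lemma sqrt_Hden_le (f : R -> R) (t : R) :
  sqrt (Hden f t) <= Rabs (f t) + Rabs (t * Derive f t).
Proof.
  rewrite <- (sqrt_Rsqr (Rabs (f t) + Rabs (t * Derive f t)))
    by (pose proof (Rabs_pos (f t)); pose proof (Rabs_pos (t * Derive f t)); lra).
  apply sqrt_le_1_alt. unfold Hden, Rsqr.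
  pose proof (Rabs_pos (f t)). pose proof (Rabs_pos (t * Derive f t)).
  assert (Rabs (f t) ^ 2 = f t ^ 2) by apply pow2_abs.
  assert (Rabs (t * Derive f t) ^ 2 = t ^ 2 * Derive f t ^ 2) by (rewrite pow2_abs; ring).
  nra.
Qed.

Lemma wf_neq_0 (f : R -> R) (x : R) : f x <> 0 -> wf f x <> 0.
Proof.
  intros Hfx. unfold wf, Rdiv. apply Rmult_integral_contrapositive_currified; [exact Hfx|].
  apply Rinv_neq_0_compat, Rgt_not_eq, sqrt_lt_R0, Hden_pos, Hfx.
Qed.

Lemma Rinv_Rabs_wf (f : R -> R) (x : R) : f x <> 0 ->
  / Rabs (wf f x) = sqrt (Hden f x) / Rabs (f x).
Proof.
  intros Hfx. rewrite Rabs_wf. pose proof (Rabs_pos_lt _ Hfx).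
  pose proof (sqrt_lt_R0 _ (Hden_pos f x Hfx)). field. lra.
Qed.

Lemma kappa_val_le_Rinv_wf (f : R -> R) (x : R) : f x <> 0 ->
  kappa_val f x <= / Rabs (wf f x).
Proof.
  intros Hfx. unfold kappa_val. rewrite Rinv_Rabs_wf by exact Hfx. rewrite <- Rabs_mult.
  apply Rmult_le_compat_r; [apply Rlt_le, Rinv_0_lt_compat, Rabs_pos_lt, Hfx|].
  apply Rabs_mul_Derive_le_sqrt_Hden.
Qed.

Lemma Rinv_wf_le_1_plus_kappa_val (f : R -> R) (x : R) : f x <> 0 ->
  / Rabs (wf f x) <= 1 + kappa_val f x.
Proof.
  intros Hfx. unfold kappa_val. rewrite Rinv_Rabs_wf by exact Hfx. pose proof (Rabs_pos_lt _ Hfx).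
  replace (1 + Rabs x * Rabs (Derive f x) / Rabs (f x))
    with ((Rabs (f x) + Rabs (x * Derive f x)) / Rabs (f x)) by (rewrite Rabs_mult; field; lra).
  apply Rmult_le_compat_r; [apply Rlt_le, Rinv_0_lt_compat; lra|]. apply sqrt_Hden_le.
Qed.

Lemma kappa_val_le_of_wf_ge (f : R -> R) (x u : R) : f x <> 0 -> 0 < u ->
  u <= Rabs (wf f x) -> kappa_val f x <= / u.
Proof.
  intros Hfx Hu Hw. eapply Rle_trans; [apply kappa_val_le_Rinv_wf, Hfx|].
  apply Rinv_le_contravar; assumption.
Qed.

Lemma cubic_on_unit_circle_le (al be h : R) : al ^ 2 + be ^ 2 = 1 ->
  Rabs (al ^ 3 - be * al ^ 2 - al * h) <= 2 + Rabs h.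
Proof.
  intros E.
  pose proof (pow2_ge_0 al). pose proof (pow2_ge_0 be).
  assert (Hal : Rabs al <= 1) by (apply Rabs_le; nra).
  assert (Hbe : Rabs be <= 1) by (apply Rabs_le; nra).
  assert (Hab : Rabs (al - be) <= 2) by (apply Rabs_le; apply Rabs_le_between in Hal, Hbe; lra).
  replace (al ^ 3 - be * al ^ 2 - al * h) with (al ^ 2 * (al - be) - al * h) by ring.
  eapply Rle_trans; [apply Rabs_triang|]. rewrite Rabs_Ropp, !Rabs_mult.
  rewrite (Rabs_pos_eq (al ^ 2)) by lra.
  pose proof (Rabs_pos h). pose proof (Rabs_pos al). pose proof (Rabs_pos (al - be)). nra.
Qed.

Lemma is_derive_wf (f : R -> R) (s : R) : f s <> 0 ->
  is_derive f s (Derive f s) -> is_derive (Derive f) s (Derive_n f 2 s) ->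
  exists l, is_derive (wf f) s l /\ Rabs (s * l) <= 2 + Rabs (Hf f s).
Proof.
  intros Hfs D1 D2.
  set (F := f s). set (F1 := Derive f s). set (F2 := Derive_n f 2 s).
  pose proof (Hden_pos f s Hfs) as HD. unfold Hden in HD. fold F F1 in HD.
  set (r := sqrt (F ^ 2 + s ^ 2 * F1 ^ 2)).
  assert (Hr : 0 < r) by (apply sqrt_lt_R0, HD).
  assert (Hr2 : r * r = F ^ 2 + s ^ 2 * F1 ^ 2) by (apply sqrt_sqrt; lra).
  exists (F1 / r - F * (F * F1 + s * F1 ^ 2 + s ^ 2 * F1 * F2) / (r * r * r)).
  split.
  - unfold wf, Hden. auto_derive.
    + repeat split; try (eexists; eassumption);
        replace (f s * (f s * 1) + s * (s * 1) * (Derive f s * (Derive f s * 1)))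
          with (F ^ 2 + s ^ 2 * F1 ^ 2) by (unfold F, F1; ring); [exact HD|].
      fold r. lra.
    + change (Derive (fun x => f x) s) with F1.
      change (Derive (fun x => Derive f x) s) with F2. fold F F1.
      replace (F * (F * 1) + s * (s * 1) * (F1 * (F1 * 1))) with (F ^ 2 + s ^ 2 * F1 ^ 2) by ring.
      fold r. field. lra.
  - (* with al = s F1 / r and be = F / r, s times the derivative is al^3 - be al^2 - al H *)
    assert (EH : Hf f s = s ^ 2 * F * F2 / (r * r)) by (unfold Hf, Hden; rewrite Hr2; reflexivity).
    replace (s * (F1 / r - F * (F * F1 + s * F1 ^ 2 + s ^ 2 * F1 * F2) / (r * r * r)))
      with ((s * F1 / r) ^ 3 - (F / r) * (s * F1 / r) ^ 2
            - (s * F1 / r) * (s ^ 2 * F * F2 / (r * r))).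
    + rewrite EH. apply cubic_on_unit_circle_le.
      replace ((s * F1 / r) ^ 2 + (F / r) ^ 2) with ((F ^ 2 + s ^ 2 * F1 ^ 2) / (r * r))
        by (field; lra).
      rewrite <- Hr2. field. lra.
    + transitivity (s * F1 * (F ^ 2 + s ^ 2 * F1 ^ 2) / (r * r * r)
                    - s * F * (F * F1 + s * F1 ^ 2 + s ^ 2 * F1 * F2) / (r * r * r));
        [field; lra|].
      rewrite <- Hr2. field. lra.
Qed.

Lemma log_linear_path (a x y : R) : 0 < a -> a < x -> a < y ->
  exists (sg : R) (p : R -> R), Rabs sg = 1 /\ p 0 = x /\ p (Rabs (ln y - ln x)) = y /\
    (forall t, 0 <= t <= Rabs (ln y - ln x) -> a < p t) /\ (forall t, is_derive p t (sg * p t)).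
Proof.
  intros Ha Hx Hy. set (T := Rabs (ln y - ln x)).
  assert (Hsg : exists sg, (sg = 1 \/ sg = -1) /\ sg * T = ln y - ln x).
  { unfold T. destruct (Rle_dec (ln x) (ln y)).
    - exists 1. rewrite Rabs_pos_eq by lra. split; [now left | ring].
    - exists (-1). rewrite Rabs_left by lra. split; [now right | ring]. }
  destruct Hsg as [sg [Hsg HsgT]].
  assert (Hsg1 : Rabs sg = 1)
    by (destruct Hsg as [-> | ->]; [apply Rabs_R1 | rewrite Rabs_left; lra]).
  set (p := fun t => exp (ln x + sg * t)).
  assert (Hp0 : p 0 = x) by (unfold p; rewrite Rmult_0_r, Rplus_0_r; apply exp_ln; lra).
  assert (HpT : p T = y).
  { unfold p. rewrite HsgT. replace (ln x + (ln y - ln x)) with (ln y) by ring. apply exp_ln. lra. }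
  assert (Hpa : forall t, 0 <= t <= T -> a < p t).
  { intros t Ht. apply ln_lt_inv; [lra | apply exp_pos|]. unfold p. rewrite ln_exp.
    pose proof (ln_increasing a x Ha Hx). pose proof (ln_increasing a y Ha Hy).
    destruct Hsg as [-> | ->]; lra. }
  exists sg, p. split; [exact Hsg1|]. split; [exact Hp0|]. split; [exact HpT|].
  split; [exact Hpa|]. intros t. unfold p. auto_derive; [exact I | ring].
Qed.

Lemma wf_stable_on_log_ball (a : R) (f : R -> R) (B : R) :
  0 < a -> real_analytic_on (fun x => a < x) f -> (forall x, a < x -> Rabs (Hf f x) <= B) ->
  forall x y, a < x -> a < y -> f x <> 0 ->
  Rabs (ln y - ln x) <= Rabs (wf f x) / (2 * (2 + B)) ->
  f y <> 0 /\ Rabs (wf f x) / 2 <= Rabs (wf f y).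
Proof.
  intros Ha Han HB x y Hx Hy Hfx HT.
  assert (HB0 : 0 <= B) by (eapply Rle_trans; [apply Rabs_pos | apply (HB x Hx)]).
  set (v := Rabs (wf f x)) in HT |- *. set (T := Rabs (ln y - ln x)) in HT.
  assert (Hv : 0 < v) by apply Rabs_pos_lt, wf_neq_0, Hfx.
  destruct (log_linear_path a x y Ha Hx Hy) as [sg [p [Hsg1 [Hp0 [HpT [Hpa Hpd]]]]]].
  fold T in HpT, Hpa.
  assert (HFd : forall t, 0 <= t <= T ->
            is_derive (fun u => f (p u)) t (sg * p t * Derive f (p t))).
  { intros t Ht. apply (is_derive_comp f p t).
    - apply (analytic_is_derive_n a f (p t) 0 Han (Hpa t Ht)).
    - apply Hpd. }
  destruct (nonvanishing_continuation (fun u => f (p u)) (fun u => wf f (p u))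
              T (2 + B) (2 / v) v) as [HfT HwT].
  - apply Rabs_pos.
  - lra.
  - apply Rlt_le, Rdiv_lt_0_compat; lra.
  - apply (Rmult_le_compat_l (2 + B)) in HT; [|lra].
    replace ((2 + B) * (v / (2 * (2 + B)))) with (v / 2) in HT by (field; lra). exact HT.
  - now rewrite Hp0.
  - rewrite Hp0. apply Rle_refl.
  - intros t Ht. apply Derive_correct. eexists. apply HFd, Ht.
  - intros t Ht Hft.
    destruct (is_derive_wf f (p t) Hft) as [l [Hl Hlb]];
      [apply (analytic_is_derive_n a f _ 0 Han (Hpa t Ht))
      | apply (analytic_is_derive_n a f _ 1 Han (Hpa t Ht)) |].
    pose proof (is_derive_comp (wf f) p t _ _ Hl (Hpd t)) as HW.
    assert (E : Derive (fun u => wf f (p u)) t = sg * p t * l) by exact (is_derive_unique _ _ _ HW).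
    rewrite E. split; [exact HW|].
    rewrite Rmult_assoc, Rabs_mult, Hsg1, Rmult_1_l.
    pose proof (HB (p t) (Hpa t Ht)). lra.
  - intros t Ht Hft Hwt.
    assert (E : Derive (fun u => f (p u)) t = sg * p t * Derive f (p t))
      by exact (is_derive_unique _ _ _ (HFd t Ht)).
    rewrite E, Rmult_assoc, Rabs_mult, Hsg1, Rmult_1_l.
    pose proof (Rabs_pos_lt _ Hft).
    pose proof (kappa_val_le_of_wf_ge f (p t) (v / 2) Hft ltac:(lra) Hwt) as Hk.
    unfold kappa_val in Hk.
    replace (/ (v / 2)) with (2 / v) in Hk by (field; lra).
    rewrite Rabs_mult. replace (Rabs (p t) * Rabs (Derive f (p t)))
      with (Rabs (p t) * Rabs (Derive f (p t)) / Rabs (f (p t)) * Rabs (f (p t))) by (field; lra).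
    apply Rmult_le_compat_r; [lra | exact Hk].
  - rewrite HpT in HfT, HwT. split; [exact HfT | exact HwT].
Qed.

(** * Amenability *)

Lemma kappa_val_ge_0 (f : R -> R) (x : R) : 0 <= kappa_val f x.
Proof.
  unfold kappa_val, Rdiv. rewrite <- Rabs_inv.
  apply Rmult_le_pos; [apply Rmult_le_pos|]; apply Rabs_pos.
Qed.

Lemma kappa_eq_kappa_val (f : R -> R) (x : R) : x <> 0 -> f x <> 0 ->
  kappa f x = Finite (kappa_val f x).
Proof.
  intros Hx Hfx. unfold kappa.
  destruct (Req_EM_T x 0); [contradiction|]. destruct (Req_EM_T (f x) 0); [contradiction|].
  reflexivity.
Qed.

Lemma kappa_Finite_neq_0 (f : R -> R) (x k : R) : x <> 0 -> kappa f x = Finite k -> f x <> 0.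
Proof.
  intros Hx Hk Hfx. unfold kappa in Hk.
  destruct (Req_EM_T x 0); [contradiction|].
  destruct (Req_EM_T (f x) 0); [discriminate | contradiction].
Qed.

Lemma rdist_lt_log_ball (a x y r : R) : 0 < a < x -> r <= ln x - ln a ->
  Rbar_lt (rdist y x) (Finite r) -> a < y /\ Rabs (ln y - ln x) < r.
Proof.
  intros Hax Hr H. unfold rdist in H.
  destruct (Req_EM_T y 0); [destruct (Req_EM_T x 0); [lra | contradiction]|].
  destruct (Rlt_dec 0 (y * x)) as [Hyx|]; [|contradiction].
  assert (Hy : 0 < y) by (destruct (Rlt_le_dec 0 y); [assumption | nra]).
  simpl in H. rewrite ln_div, Rabs_minus_sym in H by lra.
  split; [|exact H]. apply ln_lt_inv; [lra | exact Hy|]. apply Rabs_def2 in H. lra.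
Qed.

Lemma wf_le_log_gap (a : R) (f : R -> R) (B : R) :
  0 < a -> real_analytic_on (fun x => a < x) f -> (forall x, a < x -> Rabs (Hf f x) <= B) ->
  (forall M, exists d, 0 < d /\ forall x, a < x < a + d -> Rbar_lt (Finite M) (kappa f x)) ->
  forall x, a < x -> f x <> 0 -> Rabs (wf f x) / (2 * (2 + B)) <= ln x - ln a.
Proof.
  intros Ha Han HB Hkappa x Hx Hfx.
  set (v := Rabs (wf f x)).
  assert (Hv : 0 < v) by apply Rabs_pos_lt, wf_neq_0, Hfx.
  apply Rnot_lt_le. intros Hgap.
  destruct (Hkappa (2 / v)) as [d [Hd Hd']].
  set (s := Rmin x (a + d / 2)).
  assert (Hs : a < s <= x /\ s < a + d).
  { unfold s. split; [split; [apply Rmin_glb_lt; lra | apply Rmin_l]|].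
    eapply Rle_lt_trans; [apply Rmin_r | lra]. }
  assert (Hlog : Rabs (ln s - ln x) <= v / (2 * (2 + B))).
  { pose proof (ln_increasing a s Ha (proj1 (proj1 Hs))).
    pose proof (ln_le s x ltac:(lra) (proj2 (proj1 Hs))). rewrite Rabs_left1; lra. }
  destruct (wf_stable_on_log_ball a f B Ha Han HB x s Hx (proj1 (proj1 Hs)) Hfx Hlog)
    as [Hfs Hws].
  specialize (Hd' s ltac:(lra)). rewrite kappa_eq_kappa_val in Hd' by (lra || exact Hfs).
  pose proof (kappa_val_le_of_wf_ge f s (v / 2) Hfs ltac:(lra) Hws) as Hks.
  replace (/ (v / 2)) with (2 / v) in Hks by (field; lra). simpl in Hd'. lra.
Qed.

Theorem proposition2 (a : R) (f : R -> R) :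
  0 < a ->
  real_analytic_on (fun x => a < x) f ->
  (exists x, a < x /\ f x <> 0) ->
  (* (1a) kappa(f,x) -> +oo as x -> a *)
  (forall M, exists d, 0 < d /\
     forall x, a < x < a + d -> Rbar_lt (Finite M) (kappa f x)) ->
  (* (1b) x_j -> +oo and dist(x_j, I) -> 0 imply kappa(f,x_j) -> +oo *)
  (forall u : nat -> R,
     (forall j, a < u j) ->
     is_lim_seq u p_infty ->
     (forall eps, 0 < eps -> exists N, forall j, (N <= j)%nat ->
        rdist_set_lt (u j) (fun s => a < s /\ f s = 0) eps) ->
     forall M, exists N, forall j, (N <= j)%nat -> Rbar_lt (Finite M) (kappa f (u j))) ->
  (* (2) limsup |H(f,x)| <= C as x -> a and as x -> +oo *)
  (exists C, 0 < C /\
     (forall eps, 0 < eps -> exists d, 0 < d /\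
        forall x, a < x < a + d -> Hden f x <> 0 -> Rabs (Hf f x) <= C + eps) /\
     (forall eps, 0 < eps -> exists M, forall x, M < x -> a < x ->
        Hden f x <> 0 -> Rabs (Hf f x) <= C + eps)) ->
  amenable (fun x => a < x) f.
Proof.
  intros Ha Han _ Hkappa_a _ HH.
  destruct (Hf_bounded a f Ha Han HH) as [B [HB0 HB]].
  exists (2 * (2 + B)). split; [lra|].
  intros x k Hx Hk.
  assert (Hfx : f x <> 0) by (apply (kappa_Finite_neq_0 f x k); [lra | exact Hk]).
  rewrite kappa_eq_kappa_val in Hk by (lra || exact Hfx). injection Hk as Hk.
  pose proof (kappa_val_ge_0 f x) as Hk0.
  pose proof (Rinv_wf_le_1_plus_kappa_val f x Hfx) as Hv.
  rewrite Hk in Hk0, Hv. set (v := Rabs (wf f x)) in Hv.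
  assert (Hv0 : 0 < v) by apply Rabs_pos_lt, wf_neq_0, Hfx.
  assert (Hr : 1 / (2 * (2 + B) * (1 + k)) <= v / (2 * (2 + B))).
  { replace (1 / (2 * (2 + B) * (1 + k))) with (/ (1 + k) / (2 * (2 + B))) by (field; lra).
    apply Rmult_le_compat_r; [apply Rlt_le, Rinv_0_lt_compat; lra|].
    rewrite <- (Rinv_inv v). apply Rinv_le_contravar; [apply Rinv_0_lt_compat|]; lra. }
  pose proof (wf_le_log_gap a f B Ha Han HB Hkappa_a x Hx Hfx) as Hgap. fold v in Hgap.
  assert (Hball : forall y, Rbar_lt (rdist y x) (Finite (1 / (2 * (2 + B) * (1 + k)))) ->
                    a < y /\ Rabs (ln y - ln x) < 1 / (2 * (2 + B) * (1 + k)))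
    by (intros y; apply rdist_lt_log_ball; lra).
  split.
  - intros y Hy. apply Hball, Hy.
  - intros y Hy. destruct (Hball y Hy) as [Hay Hlog].
    destruct (wf_stable_on_log_ball a f B Ha Han HB x y Hx Hay Hfx) as [Hfy Hwy]; [fold v; lra|].
    unfold mu. rewrite kappa_eq_kappa_val by (lra || exact Hfy). simpl.
    pose proof (kappa_val_le_of_wf_ge f y (v / 2) Hfy ltac:(lra) Hwy) as Hky.
    replace (/ (v / 2)) with (2 * / v) in Hky by (field; lra).
    assert (0 <= B * (1 + k)) by (apply Rmult_le_pos; lra). lra.
Qed.
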